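(* The matrix $\mathbb G(1)$ is a unitary operator on $\ell^2$ of the set of oriented edges of $\mathcal B$, i.e. on the space of $X=\sum_{\vec A}x_{\vec A}\delta_{\vec A}$ with norm $\|X\|^2=\sum_{\vec A}|x_{\vec A}|^2$.
   Context: $\mathcal B$ is the $2$-regular Bethe lattice: the infinite tree in which every node has exactly $3$ neighbours; each edge has two orientations, $-\vec A$ being the opposite of $\vec A$; write $\vec A\to\vec B$ when the terminal node of $\vec A$ equals the initial node of $\vec B$. $\mathbb G(1)$ is the matrix indexed by oriented edges with entries $\mathbb G(1)_{\vec B,\vec A}=-1/3$ if $\vec B=-\vec A$, $2/3$ if $\vec A\to\vec B$ and $\vec B\ne-\vec A$, and $0$ otherwise (it is the time-one propagator of Dirac masses for the wave equation with Kirchhoff conditions on $\mathcal B$). *)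

From HB Require Import structures.
From mathcomp Require Import all_boot all_order all_algebra.
From mathcomp Require Import all_classical all_reals.
From mathcomp Require Import constructive_ereal ereal esum.
From mathcomp Require Import complex.
Set Implicit Arguments. Unset Strict Implicit. Unset Printing Implicit Defensive.
Import Order.TTheory GRing.Theory Num.Theory.
Local Open Scope ring_scope.
Local Open Scope classical_set_scope.
Local Open Scope complex_scope.
Import ComplexField.

(* The 2-regular Bethe lattice B (infinite tree, every node of degree 3),   *)
(* realised as the Cayley graph of Z/2 * Z/2 * Z/2: nodes are reduced words *)
(* over the alphabet 'I_3 (no two consecutive equal letters, most recent    *)
(* letter at the head), and node w is adjacent to step w a for a : 'I_3.    *)

Definition reduced (w : seq 'I_3) : bool := sorted (fun a b => a != b) w.

Definition node := {w : seq 'I_3 | reduced w}.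

Definition step_seq (w : seq 'I_3) (a : 'I_3) : seq 'I_3 :=
  if w is b :: w' then (if b == a then w' else a :: w) else [:: a].

Lemma step_seq_reduced (w : seq 'I_3) (a : 'I_3) :
  reduced w -> reduced (step_seq w a).
Proof.
case: w => [|b w'] //= Hw.
case: eqP => [_|/eqP Hba].
  by move: Hw; rewrite /reduced /=; apply: path_sorted.
by rewrite /reduced /= eq_sym Hba Hw.
Qed.

Definition step (v : node) (a : 'I_3) : node :=
  exist _ (step_seq (proj1_sig v) a) (step_seq_reduced a (proj2_sig v)).

(* Oriented edges: (v, a) is the edge from v to step v a.  Every edge        *)
(* {v, step v a} carries exactly the two orientations (v,a), (step v a, a).  *)
Definition oedge := (node * 'I_3)%type.

Definition init (e : oedge) : node := e.1.
Definition term (e : oedge) : node := step e.1 e.2.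
Definition opp (e : oedge) : oedge := (term e, e.2).

Definition arrow (A B : oedge) : bool := term A == init B.

Definition G1 (R : realType) (B A : oedge) : R[i] :=
  if B == opp A then (- (1 / 3%:R))%:C
  else if arrow A B then (2%:R / 3%:R)%:C
  else 0.

Definition sqmod (R : realType) (z : R[i]) : R := complex.Re z ^+ 2 + complex.Im z ^+ 2.

Definition l2sq (R : realType) (X : oedge -> R[i]) : \bar R :=
  \esum_(A in [set: oedge]) (sqmod (X A))%:E.

Definition in_l2 (R : realType) (X : oedge -> R[i]) : Prop :=
  (l2sq X < +oo)%E.

(* matrix-vector product (M X)_B = sum_A M_{B,A} x_A; meaningful when every *)
(* row of M has finite support (the sum is then a finite sum).              *)
Definition matapp (R : realType) (M : oedge -> oedge -> R[i])
  (X : oedge -> R[i]) : oedge -> R[i] :=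
  fun B => \sum_(A \in [set: oedge]) M B A * X A.

(* linear isometry of a Hilbert space is exactly a unitary operator.)       *)
Definition unitary_l2 (R : realType) (M : oedge -> oedge -> R[i]) : Prop :=
  [/\ (forall B, finite_set [set A | M B A != 0]),
      (forall X, in_l2 X -> in_l2 (matapp M X) /\ l2sq (matapp M X) = l2sq X)
    & (forall Y, in_l2 Y -> exists2 X, in_l2 X & matapp M X = Y)].

From Pilot Require Import Defs.
From HB Require Import structures.
From mathcomp Require Import all_boot all_order all_algebra.
From mathcomp Require Import all_classical all_reals.
From mathcomp Require Import constructive_ereal ereal esum.
From mathcomp Require Import complex ring.
Set Implicit Arguments. Unset Strict Implicit. Unset Printing Implicit Defensive.
Import Order.TTheory GRing.Theory Num.Theory.
Local Open Scope ring_scope.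
Local Open Scope classical_set_scope.
Local Open Scope complex_scope.
Import ComplexField.

(* G(1) is a direct sum over the nodes v of one and the same 3x3 block: it
   sends the three edges entering v to the three edges leaving v through the
   scattering matrix C = 2/3 J - I.  Both families partition the oriented
   edges (A |-> -A is a bijection between them), so the l^2 norm splits as a
   sum over nodes of norms in C^3, and unitarity of G(1) reduces to C being a
   real symmetric orthogonal matrix; the preimage of Y is G(1)^T Y. *)

Lemma step_seqK (w : seq 'I_3) (a : 'I_3) :
  reduced w -> step_seq (step_seq w a) a = w.
Proof.
case: w => [|b w'] /=; first by rewrite eqxx.
case: eqP => [->|/eqP neq_ba] red_w /=; last by rewrite eqxx.
case: w' red_w => [|c w''] //= /andP[neq_ac _].
by rewrite eq_sym (negPf neq_ac).
Qed.

Lemma stepK (a : 'I_3) : involutive (step^~ a).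
Proof. by case=> w red_w; apply: val_inj; rewrite /= step_seqK. Qed.

Lemma oppK : involutive Defs.opp.
Proof. by case=> v a; rewrite /Defs.opp /term /= stepK. Qed.

Lemma opp_term (A : oedge) : A = Defs.opp (term A, A.2).
Proof. by case: A => v a; rewrite /Defs.opp /term /= stepK. Qed.

Definition in_edges (v : node) : seq oedge := [seq Defs.opp (v, a) | a <- enum 'I_3].

Lemma mem_in_edges (v : node) (a : 'I_3) : Defs.opp (v, a) \in in_edges v.
Proof. by rewrite (map_f (fun a => Defs.opp (v, a))) ?mem_enum. Qed.

Lemma in_edges_uniq (v : node) : uniq (in_edges v).
Proof. by rewrite map_inj_uniq ?enum_uniq // => a b /(congr1 snd). Qed.

Section Scattering.
Variable R : realType.

Definition scatter (a b : 'I_3) : R := if a == b then - (1 / 3%:R) else 2%:R / 3%:R.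

Lemma scatterC (a b : 'I_3) : scatter a b = scatter b a.
Proof. by rewrite /scatter eq_sym. Qed.

Lemma scatter_isometry (z : 'I_3 -> R[i]) :
  \sum_(b < 3) sqmod (\sum_(a < 3) (scatter a b)%:C * z a) = \sum_(a < 3) sqmod (z a).
Proof.
rewrite !big_ord_recr !big_ord0 /= !add0r /scatter /=.
set z0 := z _; set z1 := z _; set z2 := z _.
clearbody z0 z1 z2; case: z0 => x0 y0; case: z1 => x1 y1; case: z2 => x2 y2.
by rewrite /sqmod /=; field.
Qed.

Lemma scatter_involutive (y : 'I_3 -> R[i]) (b : 'I_3) :
  \sum_(a < 3) (scatter a b)%:C * (\sum_(d < 3) (scatter a d)%:C * y d) = y b.
Proof.
rewrite !big_ord_recr !big_ord0 /= !add0r /scatter /=.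
set y0 := y _; set y1 := y _; set y2 := y _.
have -> : y b = if b == ord0 then y0 else if b == lift ord0 ord0 then y1 else y2.
  by case: b => [[|[|[|]]] lt_b3] //; congr y; apply: val_inj.
clearbody y0 y1 y2; case: y0 => x0 t0; case: y1 => x1 t1; case: y2 => x2 t2.
case: b => [[|[|[|]]] lt_b3] //=; apply/eqP; rewrite eq_complex /=.
all: by apply/andP; split; apply/eqP; field.
Qed.

Lemma G1_scatter (v : node) (a b : 'I_3) :
  G1 R (v, b) (Defs.opp (v, a)) = (scatter a b)%:C.
Proof.
rewrite /G1 oppK /scatter /arrow /term /init /= stepK eqxx xpair_eqE eqxx /=.
by rewrite eq_sym; case: eqP.
Qed.

Lemma G1_support (B A : oedge) : G1 R B A != 0 -> A \in in_edges B.1.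
Proof.
case: B => v b; rewrite /G1; case: ifP => [/eqP opp_A _|_].
  by rewrite -(oppK A) -opp_A; exact: mem_in_edges.
case: ifP => [/eqP term_A _|_]; last by rewrite eqxx.
rewrite (opp_term A) term_A; exact: mem_in_edges.
Qed.

Lemma matapp_local (M : oedge -> oedge -> R[i]) (X : oedge -> R[i]) (v : node) (b : 'I_3) :
  (forall B A, M B A != 0 -> A \in in_edges B.1) ->
  matapp M X (v, b) = \sum_(a < 3) M (v, b) (Defs.opp (v, a)) * X (Defs.opp (v, a)).
Proof.
move=> M_support; rewrite /matapp.
rewrite -(fsbig_widen [set` in_edges v] setT) //; last first.
  move=> A [_ /= A_out]; apply/eqP; rewrite mulf_eq0; apply/orP; left.
  by apply: contraT => /M_support.
rewrite (fsbig_fwiden (in_edges v)) ?in_edges_uniq //; last by move=> A [].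
by rewrite big_map big_enum.
Qed.

Lemma matapp_G1 (X : oedge -> R[i]) (v : node) (b : 'I_3) :
  matapp (@G1 R) X (v, b) = \sum_(a < 3) (scatter a b)%:C * X (Defs.opp (v, a)).
Proof.
rewrite matapp_local; last exact: G1_support.
by apply: eq_bigr => a _; rewrite G1_scatter.
Qed.

Lemma sqmod_ge0 (z : R[i]) : 0 <= sqmod z.
Proof. by rewrite /sqmod addr_ge0 // sqr_ge0. Qed.

Lemma l2sq_out (X : oedge -> R[i]) :
  l2sq X = \esum_(v in [set: node]) (\sum_(a < 3) sqmod (X (v, a)))%:E.
Proof.
have sqmod_ge0E v a : (0 <= (sqmod (X (v, a)))%:E)%E by rewrite lee_fin sqmod_ge0.
rewrite /l2sq.
have -> : [set: oedge] = [set: node] `*`` (fun=> [set: 'I_3]) by apply/seteqP.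
rewrite (eq_esum (fun A _ => congr1 (fun A => (sqmod (X A))%:E) (surjective_pairing A))).
rewrite -(esum_esum (a := fun v a => (sqmod (X (v, a)))%:E)) //.
apply: eq_esum => v _; rewrite esum_fset //; last exact: finite_finset.
rewrite (fsbig_fwiden (enum 'I_3)) ?enum_uniq //.
- by rewrite big_enum sumEFin.
- by move=> a _; rewrite /= mem_enum.
- by move=> a [_ /(_ I)].
Qed.

Lemma l2sq_in (X : oedge -> R[i]) :
  l2sq X = \esum_(v in [set: node]) (\sum_(a < 3) sqmod (X (Defs.opp (v, a))))%:E.
Proof.
rewrite -(l2sq_out (X \o Defs.opp)) /l2sq (reindex_esum setT setT Defs.opp) //.
by rewrite setTT_bijective; exists Defs.opp; apply: oppK.
Qed.

Lemma G1_isometry (X : oedge -> R[i]) : l2sq (matapp (@G1 R) X) = l2sq X.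
Proof.
rewrite l2sq_out l2sq_in; apply: eq_esum => v _; congr EFin.
under eq_bigr do rewrite matapp_G1.
exact: (scatter_isometry (fun a => X (Defs.opp (v, a)))).
Qed.

Lemma G1_onto (Y : oedge -> R[i]) :
  exists2 X, l2sq X = l2sq Y & matapp (@G1 R) X = Y.
Proof.
pose X A := \sum_(b < 3) (scatter A.2 b)%:C * Y (term A, b).
have XE v a : X (Defs.opp (v, a)) = \sum_(b < 3) (scatter a b)%:C * Y (v, b).
  by rewrite /X /Defs.opp /term /= stepK.
exists X.
  rewrite l2sq_in l2sq_out; apply: eq_esum => v _; congr EFin.
  under eq_bigr do rewrite XE.
  under eq_bigr do under eq_bigr do rewrite scatterC.
  exact: (scatter_isometry (fun b => Y (v, b))).
apply: funext => -[v b]; rewrite matapp_G1.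
under eq_bigr do rewrite XE.
exact: (scatter_involutive (fun d => Y (v, d))).
Qed.

End Scattering.

Theorem lemma1 (R : realType) : unitary_l2 (@G1 R).
Proof.
split.
- move=> B; apply: (sub_finite_set _ (finite_seq (in_edges B.1))).
  exact: G1_support.
- by move=> X; rewrite /in_l2 G1_isometry.
- move=> Y Y_l2; have [X norm_X GX] := G1_onto Y.
  by exists X; rewrite // /in_l2 norm_X.
Qed.
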